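(* Let $A$ be a partially ordered set and let $G,G'$ be games over $A$. If $G\equiv G'$ and both $G$ and $G'$ are in canonical form, then $G=G'$ (they are literally the same game).
   Context: Games over a poset $A$ are defined inductively: for each $a\in A$ there is an atomic game $[a]$, which has no options; and if $L$ and $R$ are non-empty sets of games, then $\{L\mid R\}$ is a composite game with left options $L$ and right options $R$; two games are equal if both are atomic with equal atoms, or both are composite with equal sets of left options and equal sets of right options. The relations $\le$ and $\lhd$ are defined by simultaneous recursion: $G\le H$ iff (1) every left option $G^L$ of $G$ satisfies $G^L\lhd H$, (2) every right option $H^R$ of $H$ satisfies $G\lhd H^R$, and (3) if $G$ or $H$ is atomic then $G\lhd H$; and $G\lhd H$ iff (1) some right option $G^R$ of $G$ satisfies $G^R\le H$, or (2) some left option $H^L$ of $H$ satisfies $G\le H^L$, or (3) $G=[a]$, $H=[b]$ are atomic and $a\le b$. $G\equiv H$ means $G\le H$ and $H\le G$. Canonical form: among distinct left options $H,K$ of $G$, $K$ is dominated if $K\le H$; among distinct right options $H,K$, $K$ is dominated if $H\le K$. A left option $H$ of $G$ is reversible if $H$ has a right option $K$ with $K\le G$; a right option $H$ of $G$ is reversible if $H$ has a left option $K$ with $G\le K$. An option $H$ of $G$ is a passing option if $H\equiv G$. $G$ is in canonical form if it has no dominated, reversible or passing options and all its options are in canonical form. *)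

From HB Require Import structures.
From mathcomp Require Import all_boot all_order.
Set Implicit Arguments. Unset Strict Implicit. Unset Printing Implicit Defensive.
Import Order.Theory.

(* The *set* of left options is the image of L; two games are identical
   (the paper's "G = H") iff [gident G H] holds (extensional set equality,
   recursively), see below. *)
Inductive game (T : Type) : Type :=
| Atom : T -> game T
| Comp : forall (I J : Type), inhabited I -> inhabited J ->
         (I -> game T) -> (J -> game T) -> game T.

Arguments Atom {T} _.
Arguments Comp {T} I J _ _ _ _.

Section Games.
Context {d : Order.disp_t} {A : porderType d}.

Definition is_atom (G : game A) : Prop :=
  match G with Atom _ => True | Comp _ _ _ _ _ _ => False end.

Fixpoint gident (G H : game A) {struct G} : Prop :=
  match G, H with
  | Atom a, Atom b => a = b
  | Comp I0 J0 _ _ L R, Comp I1 J1 _ _ L' R' =>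
      (forall i, exists i', gident (L i) (L' i')) /\
      (forall i', exists i, gident (L i) (L' i')) /\
      (forall j, exists j', gident (R j) (R' j')) /\
      (forall j', exists j, gident (R j) (R' j'))
  | _, _ => False
  end.

(* Simultaneous recursion: grel G H = (G <= H, G <| H). *)
Fixpoint grel (G : game A) : game A -> Prop * Prop :=
  fix grelH (H : game A) : Prop * Prop :=
  let lf : Prop :=
    (match G with
     | Comp _ _ _ _ _ R => exists j, fst (grel (R j) H)
     | Atom _ => False end)
    \/ (match H with
        | Comp _ _ _ _ L' _ => exists i, fst (grelH (L' i))
        | Atom _ => False end)
    \/ (match G, H with
        | Atom a, Atom b => (a <= b)%O
        | _, _ => False end) in
  let le : Prop :=
    (match G with
     | Comp _ _ _ _ L _ => forall i, snd (grel (L i) H)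
     | Atom _ => True end)
    /\ (match H with
        | Comp _ _ _ _ _ R' => forall j, snd (grelH (R' j))
        | Atom _ => True end)
    /\ ((is_atom G \/ is_atom H) -> lf) in
  (le, lf).

Definition gle (G H : game A) : Prop := fst (grel G H).
Definition glf (G H : game A) : Prop := snd (grel G H).
Definition gequiv (G H : game A) : Prop := gle G H /\ gle H G.

(* Canonical form: no dominated, reversible or passing options, and all
   options in canonical form. "Distinct" options = not identical games. *)
Fixpoint canonical (G : game A) : Prop :=
  match G with
  | Atom _ => True
  | Comp I0 J0 _ _ L R =>
      (forall i, canonical (L i)) /\ (forall j, canonical (R j)) /\
      (forall i k, ~ gident (L k) (L i) -> ~ gle (L k) (L i)) /\
      (forall j k, ~ gident (R k) (R j) -> ~ gle (R j) (R k)) /\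
      (forall i, match L i with
                 | Comp _ _ _ _ _ LR => forall r, ~ gle (LR r) G
                 | Atom _ => True end) /\
      (forall j, match R j with
                 | Comp _ _ _ _ RL _ => forall l, ~ gle G (RL l)
                 | Atom _ => True end) /\
      (forall i, ~ gequiv (L i) G) /\
      (forall j, ~ gequiv (R j) G)
  end.

End Games.

(* The only order theory needed is transitivity of <= and <| (in all three
   mixed forms), proved by simultaneous induction on three games.  A left option X of G satisfies X <| G <= G', so X <| G';
   a right option of X below G' would be below G, i.e. X would be reversible,
   hence X <= X' for some left option X' of G'.  Symmetrically X' <= X'' for a
   left option X'' of G, and as G has no dominated options X'' is X itself, so
   X == X'.  Induction on G turns these equivalences of options into
   identities.  An atom [a] is equivalent to no canonical composite game H,
   since [a] <= H forces a left option of H to be either reversible or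
   passing. *)

From mathcomp Require Import all_boot all_order.
From Stdlib Require Import Classical.
Import Order.Theory.

Set Implicit Arguments.
Unset Strict Implicit.
Unset Printing Implicit Defensive.

Section GameOrder.
Context {d : Order.disp_t} {A : porderType d}.
Implicit Types (a b : A) (G H K X Y Z : game A).

Definition left_option G X : Prop :=
  if G is Comp _ _ _ _ L _ then exists i, L i = X else False.

Definition right_option G X : Prop :=
  if G is Comp _ _ _ _ _ R then exists j, R j = X else False.

Definition atom_le G H : Prop :=
  if (G, H) is (Atom a, Atom b) then (a <= b)%O else False.

Lemma left_option_not_atom G X : left_option G X -> ~ is_atom G.
Proof. by case: G => [? []|?????? _ []]. Qed.

Lemma right_option_not_atom G X : right_option G X -> ~ is_atom G.
Proof. by case: G => [? []|?????? _ []]. Qed.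

Lemma atom_le_is_atom G H : atom_le G H -> is_atom G /\ is_atom H.
Proof. by case: G => [a|?????]; case: H. Qed.

Lemma atom_le_trans G H K : atom_le G H -> atom_le H K -> atom_le G K.
Proof. by case: G => [a|?????]; case: H => [b|?????]; case: K => //= c; apply: le_trans. Qed.

Lemma game_opt_ind (P : game A -> Prop) :
  (forall G, (forall X, left_option G X -> P X) ->
             (forall X, right_option G X -> P X) -> P G) ->
  forall G, P G.
Proof.
move=> IH; elim=> [a|I J hI hJ L IHL R IHR]; apply: IH => //= X [k <-].
- exact: IHL.
- exact: IHR.
Qed.

Lemma gle_def G H : gle G H <->
  [/\ forall X, left_option G X -> glf X H,
      forall Y, right_option H Y -> glf G Y &
      is_atom G \/ is_atom H -> glf G H].
Proof.
rewrite /gle /glf.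
case: G => [a|I J hI hJ L R]; case: H => [b|I' J' hI' hJ' L' R'] /=.
all: split => [[h1 [h2 h3]]|[h1 h2 h3]]; split => //.
all: try (move=> ? [k <-]; exact: h1 || exact: h2).
all: try (split => //; move=> k; exact: h2 (ex_intro _ k erefl)).
all: try (move=> k; exact: h1 (ex_intro _ k erefl)).
Qed.

Lemma glf_def G H : glf G H <->
  [\/ exists2 X, right_option G X & gle X H,
      exists2 Y, left_option H Y & gle G Y |
      atom_le G H].
Proof.
rewrite /gle /glf.
case: G => [a|I J hI hJ L R]; case: H => [b|I' J' hI' hJ' L' R'] /=.
all: split; firstorder (subst; eauto).
Qed.

Lemma gle_left_glf G H X : gle G H -> left_option G X -> glf X H.
Proof. by case/gle_def => + _ _; apply. Qed.

Lemma gle_right_glf G H Y : gle G H -> right_option H Y -> glf G Y.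
Proof. by case/gle_def => _ + _; apply. Qed.

Lemma gle_atom_glf G H : gle G H -> is_atom G \/ is_atom H -> glf G H.
Proof. by case/gle_def. Qed.

Lemma glf_right G H X : right_option G X -> gle X H -> glf G H.
Proof. by move=> GX XH; apply/glf_def; apply: Or31; exists X. Qed.

Lemma glf_left G H Y : left_option H Y -> gle G Y -> glf G H.
Proof. by move=> HY GY; apply/glf_def; apply: Or32; exists Y. Qed.

Lemma glf_atom G H : atom_le G H -> glf G H.
Proof. by move=> GH; apply/glf_def; apply: Or33. Qed.

Lemma gle_atom G H : atom_le G H -> gle G H.
Proof.
move=> GH; have [aG aH] := atom_le_is_atom GH.
apply/gle_def; split => [X /left_option_not_atom//|Y /right_option_not_atom//|_].
exact: glf_atom.
Qed.

Lemma gle_atomE a b : gle (Atom a) (Atom b) <-> (a <= b)%O.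
Proof.
split => [/gle_atom_glf/(_ (or_introl I))/glf_def|]; last exact: (@gle_atom (Atom a) (Atom b)).
by case=> [[]|[]|].
Qed.

Lemma gle_trans_mutual G H K :
  [/\ gle G H -> gle H K -> gle G K,
      gle G H -> glf H K -> glf G K &
      glf G H -> gle H K -> glf G K].
Proof.
elim/game_opt_ind: G H K => G IGL IGR H.
elim/game_opt_ind: H => H IHL IHR K.
elim/game_opt_ind: K => K IKL IKR.
have le_lf : gle G H -> glf H K -> glf G K.
{ move=> GH /glf_def[[X HX XK]|[Y KY HY]|HK].
  - by case: (IHR X HX K) => _ _; apply=> //; exact: gle_right_glf GH HX.
  - by apply: (glf_left KY); case: (IKL Y KY) => + _ _; apply.
  - have [aH _] := atom_le_is_atom HK.
    case/glf_def: (gle_atom_glf GH (or_intror aH)) => [[X GX XH]|[Y HY _]|GH'].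
    + by apply: (glf_right GX); case: (IGR X GX H K) => + _ _; apply=> //; exact: gle_atom.
    + by case: (left_option_not_atom HY).
    + exact/glf_atom/(atom_le_trans GH'). }
have lf_le : glf G H -> gle H K -> glf G K.
{ move=> /glf_def[[X GX XH]|[Y HY GY]|GH] HK.
  - by apply: (glf_right GX); case: (IGR X GX H K) => + _ _; apply.
  - by case: (IHL Y HY K) => _ + _; apply=> //; exact: gle_left_glf HK HY.
  - have [_ aH] := atom_le_is_atom GH.
    case/glf_def: (gle_atom_glf HK (or_introl aH)) => [[X HX _]|[Y KY HY]|HK'].
    + by case: (right_option_not_atom HX).
    + by apply: (glf_left KY); case: (IKL Y KY) => + _ _; apply=> //; exact: gle_atom.
    + exact/glf_atom/(atom_le_trans GH). }
split=> // GH HK; apply/gle_def; split.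
- by move=> X GX; case: (IGL X GX H K) => _ _; apply => //; exact: gle_left_glf GH GX.
- by move=> Z KZ; case: (IKR Z KZ) => _ + _; apply => //; exact: gle_right_glf HK KZ.
- case=> [aG|aK]; first by apply: lf_le HK; apply: gle_atom_glf GH _; left.
  by apply: le_lf GH _; apply: gle_atom_glf HK _; right.
Qed.

Lemma gle_trans G H K : gle G H -> gle H K -> gle G K.
Proof. by case: (gle_trans_mutual G H K). Qed.

Lemma gle_glf_trans G H K : gle G H -> glf H K -> glf G K.
Proof. by case: (gle_trans_mutual G H K). Qed.

Lemma glf_gle_trans G H K : glf G H -> gle H K -> glf G K.
Proof. by case: (gle_trans_mutual G H K). Qed.

Lemma gle_refl G : gle G G.
Proof.
elim/game_opt_ind: G => G IHL IHR; apply/gle_def; split.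
- by move=> X GX; apply: (glf_left GX); apply: IHL.
- by move=> Y GY; apply: (glf_right GY); apply: IHR.
- by case: G {IHL IHR} => [a _|I J hI hJ L R [] []]; apply: glf_atom; exact: lexx.
Qed.

Lemma left_option_glf G X : left_option G X -> glf X G.
Proof. exact: gle_left_glf (gle_refl G). Qed.

Lemma right_option_glf G Y : right_option G Y -> glf G Y.
Proof. exact: gle_right_glf (gle_refl G). Qed.

Lemma gequiv_sym G H : gequiv G H -> gequiv H G.
Proof. by case. Qed.

Lemma gident_gequiv G H : gident G H -> gequiv G H.
Proof.
elim: G H => [a|I J hI hJ L IHL R IHR] [b|I' J' hI' hJ' L' R'] //=.
  by move=> <-; split; apply: gle_refl.
move=> [LL' [L'L [RR' R'R]]]; split; apply/gle_def; split => //; try by case; case.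
- move=> _ [i <-]; have [i' /IHL[le _]] := LL' i; by apply: (glf_left _ le); exists i'.
- move=> _ [j' <-]; have [j /IHR[le _]] := R'R j'; by apply: (glf_right _ le); exists j.
- move=> _ [i' <-]; have [i /IHL[_ le]] := L'L i'; by apply: (glf_left _ le); exists i.
- move=> _ [j <-]; have [j' /IHR[_ le]] := RR' j; by apply: (glf_right _ le); exists j'.
Qed.

Lemma canonical_left G X : canonical G -> left_option G X -> canonical X.
Proof. by case: G => [a _ /= []|I J hI hJ L R] /= [CL _] [i <-]. Qed.

Lemma canonical_right G Y : canonical G -> right_option G Y -> canonical Y.
Proof. by case: G => [a _ /= []|I J hI hJ L R] /= [_ [CR _]] [j <-]. Qed.

Lemma canonical_left_irreversible G X Y :
  canonical G -> left_option G X -> right_option X Y -> ~ gle Y G.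
Proof.
case: G => [a _ /= []|I J hI hJ L R] /= [_ [_ [_ [_ [irrev _]]]]] [i <-].
by move: (irrev i); case: (L i) => // I' J' hI' hJ' L' R' + [k <-].
Qed.

Lemma canonical_right_irreversible G X Y :
  canonical G -> right_option G X -> left_option X Y -> ~ gle G Y.
Proof.
case: G => [a _ /= []|I J hI hJ L R] /= [_ [_ [_ [_ [_ [irrev _]]]]]] [j <-].
by move: (irrev j); case: (R j) => // I' J' hI' hJ' L' R' + [k <-].
Qed.

Lemma canonical_left_undominated G X Y :
  canonical G -> left_option G X -> left_option G Y -> gle X Y -> gident X Y.
Proof.
case: G => [a _ /= []|I J hI hJ L R] /= [_ [_ [undom _]]] [k <-] [i <-] le_ki.
by apply: NNPP => /undom/(_ le_ki).
Qed.

Lemma canonical_right_undominated G X Y :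
  canonical G -> right_option G X -> right_option G Y -> gle X Y -> gident Y X.
Proof.
case: G => [a _ /= []|I J hI hJ L R] /= [_ [_ [_ [undom _]]]] [j <-] [k <-] le_jk.
by apply: NNPP => /undom/(_ le_jk).
Qed.

Lemma canonical_left_not_passing G X :
  canonical G -> left_option G X -> ~ gequiv X G.
Proof. by case: G => [a _ /= []|I J hI hJ L R] /= [_ [_ [_ [_ [_ [_ [pass _]]]]]]] [i <-]. Qed.

Lemma gequiv_atom a b : gequiv (Atom a) (Atom b) -> a = b.
Proof. by case=> /gle_atomE ab /gle_atomE ba; apply: le_anti; rewrite ab ba. Qed.

Lemma canonical_gequiv_atom G a : canonical G -> gequiv (Atom a) G -> G = Atom a.
Proof.
move=> CG [aG Ga]; case: G CG aG Ga => [b _ ab ba|I0 J0 hI hJ L R CG aG Ga].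
  by rewrite (gequiv_atom (conj ab ba)).
case/glf_def: (gle_atom_glf aG (or_introl I)) => [[? []]|[X GX aX]|[]].
case/glf_def: (gle_left_glf Ga GX) => [[Y XY Ya]|[? []]|Xa].
  by case: (canonical_left_irreversible CG GX XY); apply: gle_trans Ya aG.
have eX : X = Atom a.
  by case: X GX aX Xa => // b _ ab ba; rewrite (gequiv_atom (conj ab (gle_atom ba))).
by case: (canonical_left_not_passing CG GX); rewrite eX.
Qed.

Lemma canonical_left_below_left G G' X :
  canonical G -> gequiv G G' -> ~ is_atom G' -> left_option G X ->
  exists2 X', left_option G' X' & gle X X'.
Proof.
move=> CG [GG' G'G] nG' GX.
case/glf_def: (glf_gle_trans (left_option_glf GX) GG') => [[Y XY YG']|//|].
  by case: (canonical_left_irreversible CG GX XY); apply: gle_trans YG' G'G.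
by case/atom_le_is_atom.
Qed.

Lemma canonical_right_above_right G G' Y :
  canonical G -> gequiv G G' -> ~ is_atom G' -> right_option G Y ->
  exists2 Y', right_option G' Y' & gle Y' Y.
Proof.
move=> CG [GG' G'G] nG' GY.
case/glf_def: (gle_glf_trans G'G (right_option_glf GY)) => [//|[X YX G'X]|].
  by case: (canonical_right_irreversible CG GY YX); apply: gle_trans GG' G'X.
by case/atom_le_is_atom.
Qed.

Lemma canonical_left_match G G' X :
  canonical G -> canonical G' -> gequiv G G' -> ~ is_atom G' -> left_option G X ->
  exists2 X', left_option G' X' & gequiv X X'.
Proof.
move=> CG CG' GG' nG' GX.
have [X' G'X' XX'] := canonical_left_below_left CG GG' nG' GX.
have [X'' GX'' X'X''] :=
  canonical_left_below_left CG' (gequiv_sym GG') (left_option_not_atom GX) G'X'.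
have [_ X''X] := gident_gequiv (canonical_left_undominated CG GX GX'' (gle_trans XX' X'X'')).
by exists X' => //; split => //; apply: gle_trans X'X'' X''X.
Qed.

Lemma canonical_right_match G G' Y :
  canonical G -> canonical G' -> gequiv G G' -> ~ is_atom G' -> right_option G Y ->
  exists2 Y', right_option G' Y' & gequiv Y Y'.
Proof.
move=> CG CG' GG' nG' GY.
have [Y' G'Y' Y'Y] := canonical_right_above_right CG GG' nG' GY.
have [Y'' GY'' Y''Y'] :=
  canonical_right_above_right CG' (gequiv_sym GG') (right_option_not_atom GY) G'Y'.
have [YY'' _] := gident_gequiv (canonical_right_undominated CG GY'' GY (gle_trans Y''Y' Y'Y)).
by exists Y' => //; split => //; apply: gle_trans YY'' Y''Y'.
Qed.

End GameOrder.

Theorem lemma4p21 (d : Order.disp_t) (A : porderType d) (G G' : game A) :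
  gequiv G G' -> canonical G -> canonical G' -> gident G G'.
Proof.
elim: G G' => [a|I J hI hJ L IHL R IHR] G' GG' CG CG'.
  by rewrite (canonical_gequiv_atom CG' GG').
case: G' GG' CG' => [b|I' J' hI' hJ' L' R'] GG' CG'.
  by have := canonical_gequiv_atom CG (gequiv_sym GG').
have G'G := gequiv_sym GG'.
have nG : ~ is_atom (Comp I J hI hJ L R) by [].
have nG' : ~ is_atom (Comp I' J' hI' hJ' L' R') by [].
split; [|split; [|split]].
- move=> i; have [_ [i' <-] eqv] := canonical_left_match CG CG' GG' nG' (ex_intro _ i erefl).
  by exists i'; apply: IHL eqv (canonical_left CG _) (canonical_left CG' _); eexists.
- move=> i'; have [_ [i <-] eqv] := canonical_left_match CG' CG G'G nG (ex_intro _ i' erefl).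
  by exists i; apply: IHL (gequiv_sym eqv) (canonical_left CG _) (canonical_left CG' _); eexists.
- move=> j; have [_ [j' <-] eqv] := canonical_right_match CG CG' GG' nG' (ex_intro _ j erefl).
  by exists j'; apply: IHR eqv (canonical_right CG _) (canonical_right CG' _); eexists.
- move=> j'; have [_ [j <-] eqv] := canonical_right_match CG' CG G'G nG (ex_intro _ j' erefl).
  by exists j; apply: IHR (gequiv_sym eqv) (canonical_right CG _) (canonical_right CG' _); eexists.
Qed.
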